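(* For $\psi\in\mathbb{R}$ let $R^{xw}_\psi:\mathbb{R}^4\to\mathbb{R}^4$ be the linear map with matrix $\begin{pmatrix}\cos\psi&0&0&-\sin\psi\\0&1&0&0\\0&0&1&0\\ \sin\psi&0&0&\cos\psi\end{pmatrix}$, and let $Q(\psi)=\pi\big(R^{xw}_\psi(\mathcal{C})\setminus\{(0,0,0,1)\}\big)\subset\mathbb{R}^3$, where $\mathcal{C}=\{(x,y,z,w): x^2+y^2=\tfrac12=z^2+w^2\}$. Then: (i) $Q(0)$ has generalized reflectional symmetry along the $z$-axis. (ii) If $0<|\psi|<\pi/2$, then $Q(\psi)$ has generalized reflectional symmetry along the vertical line $\{(\tan\psi,0,t):t\in\mathbb{R}\}$; and if $0<|\psi|\le\pi/2$, then $Q(\psi)$ has generalized reflectional symmetry along the horizontal line $\{(-\cot\psi,t,0):t\in\mathbb{R}\}$. (iii) Let $R$ be the rotation of $\mathbb{R}^3$ about the $x$-axis by the angle $\pi/2$. Then (a) $Q(\psi+\pi/2)=R(Q(\psi))$ and (b) $Q(\psi+\pi)=Q(\psi)$ for all $\psi$. In particular, $Q(\psi)$ has generalized reflectional symmetry along some line for every $\psi\in\mathbb{R}$.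
   Context: Stereographic projection $\pi:\mathbb{S}^3\setminus\{(0,0,0,1)\}\to\mathbb{R}^3$ is $\pi(x,y,z,w)=\frac{1}{1-w}(x,y,z)$, where $\mathbb{S}^3$ is the unit sphere of $\mathbb{R}^4$. For $\mathbf{a}\in\mathbb{R}^3$ and $\rho>0$ let $\psi_{\mathbf{a},\rho}:\mathbb{R}^3\setminus\{\mathbf{a}\}\to\mathbb{R}^3\setminus\{\mathbf{a}\}$, $\psi_{\mathbf{a},\rho}(\mathbf{p})=\rho^2\frac{\mathbf{p}-\mathbf{a}}{|\mathbf{p}-\mathbf{a}|^2}+\mathbf{a}$ (reflection about the sphere of center $\mathbf{a}$, radius $\rho$). A set $Q\subset\mathbb{R}^3$ has generalized reflectional symmetry along a line $l$ if there exist $\mathbf{m}_0\in l$ and $\rho_0>0$ such that for every $\mathbf{a}\in l$, with $\rho=\sqrt{|\mathbf{a}-\mathbf{m}_0|^2+\rho_0^2}$, one has $\psi_{\mathbf{a},\rho}(Q\setminus\{\mathbf{a}\})=Q\setminus\{\mathbf{a}\}$. *)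

From Stdlib Require Import Reals Lra.
Open Scope R_scope.

Record V3 := mkV3 { v3x : R; v3y : R; v3z : R }.
Record V4 := mkV4 { v4x : R; v4y : R; v4z : R; v4w : R }.

Definition V3add (p q : V3) : V3 := mkV3 (v3x p + v3x q) (v3y p + v3y q) (v3z p + v3z q).
Definition V3sub (p q : V3) : V3 := mkV3 (v3x p - v3x q) (v3y p - v3y q) (v3z p - v3z q).
Definition V3scal (c : R) (p : V3) : V3 := mkV3 (c * v3x p) (c * v3y p) (c * v3z p).
Definition V3norm2 (p : V3) : R := v3x p ^ 2 + v3y p ^ 2 + v3z p ^ 2.

(* Stereographic projection pi(x,y,z,w) = (x,y,z)/(1-w) (used off the north pole). *)
Definition stereo (u : V4) : V3 :=
  mkV3 (v4x u / (1 - v4w u)) (v4y u / (1 - v4w u)) (v4z u / (1 - v4w u)).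

Definition north_pole : V4 := mkV4 0 0 0 1.

Definition sphere_inv (a : V3) (rho : R) (p : V3) : V3 :=
  V3add (V3scal (rho ^ 2 / V3norm2 (V3sub p a)) (V3sub p a)) a.

Definition gen_refl_sym (Q : V3 -> Prop) (l : V3 -> Prop) : Prop :=
  exists m0 : V3, l m0 /\ exists rho0 : R, 0 < rho0 /\
    forall a : V3, l a ->
      let rho := sqrt (V3norm2 (V3sub a m0) + rho0 ^ 2) in
      forall p : V3,
        (Q p /\ p <> a) <->
        (exists q : V3, Q q /\ q <> a /\ p = sphere_inv a rho q).

Definition line (p0 d : V3) : V3 -> Prop := fun p => exists t : R, p = V3add p0 (V3scal t d).

Definition clifford (u : V4) : Prop :=
  v4x u ^ 2 + v4y u ^ 2 = 1 / 2 /\ v4z u ^ 2 + v4w u ^ 2 = 1 / 2.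

Definition Rxw (psi : R) (u : V4) : V4 :=
  mkV4 (cos psi * v4x u - sin psi * v4w u) (v4y u) (v4z u)
       (sin psi * v4x u + cos psi * v4w u).

Definition Qpsi (psi : R) : V3 -> Prop :=
  fun p => exists u : V4, clifford u /\ Rxw psi u <> north_pole /\ p = stereo (Rxw psi u).

Definition rotX (p : V3) : V3 :=
  mkV3 (v3x p) (cos (PI / 2) * v3y p - sin (PI / 2) * v3z p)
       (sin (PI / 2) * v3y p + cos (PI / 2) * v3z p).

(** Lift everything to the unit sphere of R^4.  The hyperplane orthogonal to
    (a, -1) passes through the north pole, and the Euclidean reflection in it is
    carried by stereographic projection to the inversion in the sphere of centre
    a and radius sqrt(|a|^2 + 1).  Along each of the lines of the theorem these
    radii are exactly the ones required, and the normals (a, -1), rotated back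
    by R^{xw}_{-psi}, lie in the zw-plane (vertical line) or in the xy-plane
    (horizontal line); reflections with such normals preserve the Clifford
    torus.  Part (iii) holds because R^{xw}_{psi+pi/2} and R^{xw}_{psi+pi} differ
    from R^{xw}_psi by isometries that map the Clifford torus onto itself and
    commute with the projection up to the rotation about the x-axis. *)

From Stdlib Require Import Reals Lra.
Open Scope R_scope.

Lemma V3norm2_succ_pos (p : V3) : 0 < V3norm2 p + 1.
Proof. destruct p; unfold V3norm2; simpl; nra. Qed.

Lemma V3norm2_sub_eq0 (p a : V3) : V3norm2 (V3sub p a) = 0 -> p = a.
Proof.
  destruct p as [p1 p2 p3], a as [a1 a2 a3]; unfold V3sub, V3norm2; simpl; intro H.
  pose proof (pow2_ge_0 (p1 - a1)); pose proof (pow2_ge_0 (p2 - a2));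
    pose proof (pow2_ge_0 (p3 - a3)).
  assert (p1 = a1) by nra; assert (p2 = a2) by nra; assert (p3 = a3) by nra.
  now subst.
Qed.

Definition dot4 (u v : V4) : R :=
  v4x u * v4x v + v4y u * v4y v + v4z u * v4z v + v4w u * v4w v.

Definition on_S3 (u : V4) : Prop := dot4 u u = 1.

Definition reflect4 (n u : V4) : V4 :=
  let k := 2 * dot4 u n / dot4 n n in
  mkV4 (v4x u - k * v4x n) (v4y u - k * v4y n) (v4z u - k * v4z n) (v4w u - k * v4w n).

Lemma reflect4_degenerate (n u : V4) : dot4 n n = 0 -> reflect4 n u = u.
Proof.
  destruct n as [a b c d], u as [x y z w]; unfold reflect4, dot4; simpl; intro H.
  assert (a = 0) by nra; assert (b = 0) by nra; assert (c = 0) by nra; assert (d = 0) by nra.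
  subst; f_equal; ring.
Qed.

Lemma reflect4_involutive (n u : V4) : reflect4 n (reflect4 n u) = u.
Proof.
  destruct (Req_dec (dot4 n n) 0) as [Hn | Hn].
  - now rewrite !reflect4_degenerate.
  - destruct n as [a b c d], u as [x y z w]; unfold reflect4, dot4 in *; simpl in *.
    f_equal; field; lra.
Qed.

Lemma dot4_reflect4 (n u : V4) : dot4 (reflect4 n u) (reflect4 n u) = dot4 u u.
Proof.
  destruct (Req_dec (dot4 n n) 0) as [Hn | Hn].
  - now rewrite reflect4_degenerate.
  - destruct n as [a b c d], u as [x y z w]; unfold reflect4, dot4 in *; simpl in *.
    field; lra.
Qed.

Lemma on_S3_reflect4 (n u : V4) : on_S3 u -> on_S3 (reflect4 n u).
Proof. unfold on_S3; now rewrite dot4_reflect4. Qed.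

Lemma on_S3_north (v : V4) : on_S3 v -> v4w v = 1 -> v = north_pole.
Proof.
  destruct v as [x y z w]; unfold on_S3, dot4, north_pole; simpl; intros H Hw; subst w.
  assert (x = 0) by nra; assert (y = 0) by nra; assert (z = 0) by nra.
  now subst.
Qed.

Definition invstereo (p : V3) : V4 :=
  let P := V3norm2 p + 1 in
  mkV4 (2 * v3x p / P) (2 * v3y p / P) (2 * v3z p / P) ((V3norm2 p - 1) / P).

Lemma invstereo_stereo (v : V4) : on_S3 v -> v <> north_pole -> invstereo (stereo v) = v.
Proof.
  intros HS HN.
  assert (Hw : v4w v <> 1) by (intro; apply HN, on_S3_north; assumption).
  destruct v as [x y z w]; unfold on_S3, dot4 in HS; simpl in *.
  assert (D : 1 - w <> 0) by lra.
  unfold invstereo, stereo, V3norm2; cbn [v3x v3y v3z v4x v4y v4z v4w].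
  assert (E : (x / (1 - w)) ^ 2 + (y / (1 - w)) ^ 2 + (z / (1 - w)) ^ 2 = (1 + w) / (1 - w)).
  { replace ((1 + w) / (1 - w)) with ((x * x + y * y + z * z) / ((1 - w) * (1 - w)))
      by (replace (x * x + y * y + z * z) with (1 - w * w) by lra; field; exact D).
    field; exact D. }
  rewrite E; f_equal; field; lra.
Qed.

Definition inversion_normal (a : V3) : V4 := mkV4 (v3x a) (v3y a) (v3z a) (-1).

Lemma w_reflect4_invstereo (a p : V3) :
  v4w (reflect4 (inversion_normal a) (invstereo p)) =
  1 - 2 * V3norm2 (V3sub p a) / ((V3norm2 p + 1) * (V3norm2 a + 1)).
Proof.
  pose proof (V3norm2_succ_pos p); pose proof (V3norm2_succ_pos a).
  destruct a as [a1 a2 a3], p as [p1 p2 p3];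
    unfold reflect4, invstereo, inversion_normal, dot4, V3sub, V3norm2 in *; simpl in *.
  field; lra.
Qed.

Lemma stereo_reflect4_invstereo (a p : V3) : p <> a ->
  stereo (reflect4 (inversion_normal a) (invstereo p)) =
  sphere_inv a (sqrt (V3norm2 a + 1)) p.
Proof.
  intro Hpa.
  assert (Hd : V3norm2 (V3sub p a) <> 0) by (intro; apply Hpa, V3norm2_sub_eq0; assumption).
  pose proof (V3norm2_succ_pos p) as Hp; pose proof (V3norm2_succ_pos a) as Ha.
  unfold sphere_inv; rewrite pow2_sqrt by lra.
  unfold stereo; rewrite w_reflect4_invstereo.
  revert Hd Hp Ha.
  destruct a as [a1 a2 a3], p as [p1 p2 p3];
    unfold reflect4, invstereo, inversion_normal, dot4, V3sub, V3norm2, V3add, V3scal; simpl.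
  intros; f_equal; field; lra.
Qed.

Lemma reflect4_eq_north (a : V3) (v : V4) : on_S3 v -> v <> north_pole ->
  reflect4 (inversion_normal a) v = north_pole <-> stereo v = a.
Proof.
  intros HS HN.
  pose proof (invstereo_stereo v HS HN) as Ev.
  pose proof (w_reflect4_invstereo a (stereo v)) as Hw; rewrite Ev in Hw.
  pose proof (V3norm2_succ_pos (stereo v)); pose proof (V3norm2_succ_pos a).
  split; intro Hv.
  - rewrite Hv in Hw; simpl in Hw.
    apply V3norm2_sub_eq0.
    assert (Hq : V3norm2 (V3sub (stereo v) a) * / ((V3norm2 (stereo v) + 1) * (V3norm2 a + 1)) = 0)
      by (unfold Rdiv in Hw; lra).
    destruct (Rmult_integral _ _ Hq) as [Hd | Hd]; [exact Hd |].
    exfalso; revert Hd; apply Rinv_neq_0_compat; nra.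
  - apply on_S3_north; [now apply on_S3_reflect4 |].
    rewrite Hw, Hv.
    replace (V3norm2 (V3sub a a)) with 0 by (unfold V3sub, V3norm2; simpl; ring).
    field; lra.
Qed.

Lemma stereo_reflect4 (a : V3) (v : V4) : on_S3 v -> v <> north_pole -> stereo v <> a ->
  stereo (reflect4 (inversion_normal a) v) = sphere_inv a (sqrt (V3norm2 a + 1)) (stereo v).
Proof.
  intros HS HN Ha.
  rewrite <- (invstereo_stereo v HS HN) at 1.
  now apply stereo_reflect4_invstereo.
Qed.

Lemma reflect4_stereo_image (S : V4 -> Prop) (a : V3) (v : V4) :
  (forall v, S v -> on_S3 v) ->
  (forall v, S v -> S (reflect4 (inversion_normal a) v)) ->
  S v -> v <> north_pole -> stereo v <> a ->
  S (reflect4 (inversion_normal a) v) /\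
  reflect4 (inversion_normal a) v <> north_pole /\
  stereo (reflect4 (inversion_normal a) v) <> a /\
  stereo (reflect4 (inversion_normal a) v) = sphere_inv a (sqrt (V3norm2 a + 1)) (stereo v).
Proof.
  intros HS3 Hrefl Hv HN Ha.
  pose proof (on_S3_reflect4 (inversion_normal a) v (HS3 v Hv)) as HS'.
  assert (HN' : reflect4 (inversion_normal a) v <> north_pole)
    by (rewrite reflect4_eq_north by auto; exact Ha).
  repeat split; auto.
  - intro Ha'; apply HN.
    rewrite <- (reflect4_involutive (inversion_normal a) v).
    now apply reflect4_eq_north.
  - apply stereo_reflect4; auto.
Qed.

Lemma gen_refl_sym_of_reflections (Q : V3 -> Prop) (S : V4 -> Prop) (l : V3 -> Prop)
    (m0 : V3) (rho0 : R) :
  (forall p, Q p <-> exists v, S v /\ v <> north_pole /\ p = stereo v) ->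
  (forall v, S v -> on_S3 v) ->
  (forall a v, l a -> S v -> S (reflect4 (inversion_normal a) v)) ->
  l m0 -> 0 < rho0 ->
  (forall a, l a -> V3norm2 (V3sub a m0) + rho0 ^ 2 = V3norm2 a + 1) ->
  gen_refl_sym Q l.
Proof.
  intros HQ HS3 Hrefl Hm0 Hrho0 Hradius.
  exists m0; split; [exact Hm0 |]; exists rho0; split; [exact Hrho0 |].
  intros a Ha; cbv zeta; rewrite Hradius by exact Ha; intro p.
  pose proof (fun v => reflect4_stereo_image S a v HS3 (fun v => Hrefl a v Ha)) as Hstep.
  split.
  - intros [Hp Hpa]; apply HQ in Hp as [v [Hv [HN ->]]].
    destruct (Hstep v Hv HN Hpa) as [Hv' [HN' [Ha' _]]].
    exists (stereo (reflect4 (inversion_normal a) v)); repeat split; auto.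
    + rewrite HQ; eauto.
    + destruct (Hstep _ Hv' HN' Ha') as [_ [_ [_ E]]].
      now rewrite <- E, reflect4_involutive.
  - intros [q [Hq [Hqa ->]]].
    apply HQ in Hq as [v [Hv [HN ->]]].
    destruct (Hstep v Hv HN Hqa) as [Hv' [HN' [Ha' E]]].
    rewrite <- E; split; [rewrite HQ; eauto | exact Ha'].
Qed.

Lemma sin_cos_sum_sq (psi : R) : sin psi * sin psi + cos psi * cos psi = 1.
Proof. pose proof (sin2_cos2 psi) as H; unfold Rsqr in H; lra. Qed.

Lemma dot4_Rxw (psi : R) (u v : V4) : dot4 (Rxw psi u) (Rxw psi v) = dot4 u v.
Proof.
  pose proof (sin_cos_sum_sq psi) as H.
  destruct u as [x y z w], v as [x' y' z' w']; unfold dot4, Rxw; simpl.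
  transitivity ((sin psi * sin psi + cos psi * cos psi) * (x * x' + w * w') + y * y' + z * z');
    [ring | rewrite H; ring].
Qed.

Lemma Rxw_reflect4 (psi : R) (n u : V4) :
  reflect4 (Rxw psi n) (Rxw psi u) = Rxw psi (reflect4 n u).
Proof.
  unfold reflect4 at 1; rewrite !dot4_Rxw.
  destruct n, u; unfold reflect4, Rxw; simpl; f_equal; ring.
Qed.

Lemma Rxw_Rxw_opp (psi : R) (u : V4) : Rxw psi (Rxw (- psi) u) = u.
Proof.
  pose proof (sin_cos_sum_sq psi) as H.
  destruct u as [x y z w]; unfold Rxw; simpl; rewrite cos_neg, sin_neg.
  f_equal.
  - transitivity ((sin psi * sin psi + cos psi * cos psi) * x); [ring | rewrite H; ring].
  - transitivity ((sin psi * sin psi + cos psi * cos psi) * w); [ring | rewrite H; ring].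
Qed.

Lemma clifford_on_S3 (u : V4) : clifford u -> on_S3 u.
Proof. destruct u; unfold clifford, on_S3, dot4; simpl; lra. Qed.

Lemma clifford_reflect4_zw (n u : V4) :
  v4x n = 0 -> v4y n = 0 -> clifford u -> clifford (reflect4 n u).
Proof.
  intros Hx Hy Hu.
  destruct (Req_dec (dot4 n n) 0) as [Hn | Hn]; [now rewrite reflect4_degenerate |].
  destruct n as [a b c d], u as [x y z w]; unfold clifford, reflect4, dot4 in *; simpl in *.
  subst a b; destruct Hu as [Hxy Hzw]; split.
  - rewrite <- Hxy; field; lra.
  - rewrite <- Hzw; field; lra.
Qed.

Lemma clifford_reflect4_xy (n u : V4) :
  v4z n = 0 -> v4w n = 0 -> clifford u -> clifford (reflect4 n u).
Proof.
  intros Hz Hw Hu.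
  destruct (Req_dec (dot4 n n) 0) as [Hn | Hn]; [now rewrite reflect4_degenerate |].
  destruct n as [a b c d], u as [x y z w]; unfold clifford, reflect4, dot4 in *; simpl in *.
  subst c d; destruct Hu as [Hxy Hzw]; split.
  - rewrite <- Hxy; field; lra.
  - rewrite <- Hzw; field; lra.
Qed.

Definition V3dot (p q : V3) : R := v3x p * v3x q + v3y p * v3y q + v3z p * v3z q.

Lemma gen_refl_sym_Qpsi_line (psi : R) (p0 d : V3) :
  V3dot p0 d = 0 ->
  (forall t u, clifford u ->
     clifford (reflect4 (Rxw (- psi) (inversion_normal (V3add p0 (V3scal t d)))) u)) ->
  gen_refl_sym (Qpsi psi) (line p0 d).
Proof.
  intros Horth Hcliff.
  apply (gen_refl_sym_of_reflections _ (fun v => exists u, clifford u /\ v = Rxw psi u) _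
           p0 (sqrt (V3norm2 p0 + 1))).
  - intro p; split.
    + intros [u [Hu [HN ->]]]; exists (Rxw psi u); eauto.
    + intros [v [[u [Hu ->]] [HN ->]]]; exists u; auto.
  - intros v [u [Hu ->]]; unfold on_S3; rewrite dot4_Rxw; now apply clifford_on_S3.
  - intros a v [t ->] [u [Hu ->]].
    exists (reflect4 (Rxw (- psi) (inversion_normal (V3add p0 (V3scal t d)))) u).
    split; [now apply Hcliff |].
    now rewrite <- Rxw_reflect4, Rxw_Rxw_opp.
  - exists 0; destruct p0; unfold V3add, V3scal; simpl; f_equal; ring.
  - apply sqrt_lt_R0, V3norm2_succ_pos.
  - intros a [t ->]; rewrite pow2_sqrt by (pose proof (V3norm2_succ_pos p0); lra).
    assert (Hcross : 2 * t * V3dot p0 d = 0) by (rewrite Horth; ring).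
    revert Hcross; destruct p0, d; unfold V3dot, V3add, V3scal, V3sub, V3norm2; simpl.
    intro Hcross; lra.
Qed.

Lemma Qpsi_sym_vertical (psi : R) : cos psi <> 0 ->
  gen_refl_sym (Qpsi psi) (line (mkV3 (tan psi) 0 0) (mkV3 0 0 1)).
Proof.
  intro Hc; apply gen_refl_sym_Qpsi_line; [unfold V3dot; simpl; ring |].
  intros t u; apply clifford_reflect4_zw; simpl; rewrite ?cos_neg, ?sin_neg;
    [unfold tan; field; exact Hc | ring].
Qed.

Lemma Qpsi_sym_horizontal (psi : R) : sin psi <> 0 ->
  gen_refl_sym (Qpsi psi) (line (mkV3 (- (cos psi / sin psi)) 0 0) (mkV3 0 1 0)).
Proof.
  intro Hs; apply gen_refl_sym_Qpsi_line; [unfold V3dot; simpl; ring |].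
  intros t u; apply clifford_reflect4_xy; simpl; rewrite ?cos_neg, ?sin_neg;
    [ring | field; exact Hs].
Qed.

Lemma Qpsi_transport (psi psi' : R) (sigma g : V4 -> V4) (h : V3 -> V3) :
  (forall u, clifford (sigma u) <-> clifford u) ->
  (forall u, exists u', sigma u' = u) ->
  (forall u, Rxw psi' u = g (Rxw psi (sigma u))) ->
  (forall v, g v = north_pole <-> v = north_pole) ->
  (forall v, stereo (g v) = h (stereo v)) ->
  forall p, Qpsi psi' p <-> exists q, Qpsi psi q /\ p = h q.
Proof.
  intros Hsigma Hsurj HR Hg Hh p; split.
  - intros [u [Hu [HN ->]]]; rewrite HR in *.
    exists (stereo (Rxw psi (sigma u))); split; [| apply Hh].
    exists (sigma u); split; [| split; [| reflexivity]].
    + now apply Hsigma.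
    + intro E; apply HN; now apply Hg.
  - intros [q [[u [Hu [HN ->]]] ->]].
    destruct (Hsurj u) as [u' <-].
    exists u'; rewrite HR; split; [| split].
    + now apply Hsigma.
    + intro E; apply HN; now apply Hg.
    + symmetry; apply Hh.
Qed.

Definition rotX4 (v : V4) : V4 := mkV4 (v4x v) (- v4z v) (v4y v) (v4w v).

Lemma rotX4_eq_north (v : V4) : rotX4 v = north_pole <-> v = north_pole.
Proof.
  destruct v as [x y z w]; unfold rotX4, north_pole; simpl.
  split; intro H; injection H; intros; subst; f_equal; lra.
Qed.

Lemma stereo_rotX4 (v : V4) : stereo (rotX4 v) = rotX (stereo v).
Proof.
  unfold rotX; rewrite cos_PI2, sin_PI2.
  destruct v; unfold stereo, rotX4; simpl; f_equal; unfold Rdiv; ring.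
Qed.

Lemma Qpsi_add_PI2 (psi : R) (p : V3) :
  Qpsi (psi + PI / 2) p <-> exists q, Qpsi psi q /\ p = rotX q.
Proof.
  apply (Qpsi_transport psi _ (fun u => mkV4 (- v4w u) (v4z u) (- v4y u) (v4x u)) rotX4).
  - intros [x y z w]; unfold clifford; simpl; lra.
  - intros [x y z w]; exists (mkV4 w (- z) y (- x)); simpl; f_equal; ring.
  - intro u; unfold Rxw, rotX4; simpl.
    rewrite cos_plus, sin_plus, cos_PI2, sin_PI2; f_equal; ring.
  - exact rotX4_eq_north.
  - exact stereo_rotX4.
Qed.

Lemma Qpsi_add_PI (psi : R) (p : V3) : Qpsi (psi + PI) p <-> Qpsi psi p.
Proof.
  rewrite (Qpsi_transport psi _ (fun u => mkV4 (- v4x u) (v4y u) (v4z u) (- v4w u))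
             (fun v => v) (fun q => q)).
  - split; [intros [q [Hq ->]] | intro Hp; exists p]; auto.
  - intros [x y z w]; unfold clifford; simpl; lra.
  - intros [x y z w]; exists (mkV4 (- x) y z (- w)); simpl; f_equal; ring.
  - intro u; unfold Rxw; simpl.
    rewrite cos_plus, sin_plus, cos_PI, sin_PI; f_equal; ring.
  - reflexivity.
  - reflexivity.
Qed.

Lemma sin_neq_0_abs (psi : R) : 0 < Rabs psi <= PI / 2 -> sin psi <> 0.
Proof.
  intros [H0 H1]; pose proof PI_RGT_0.
  destruct (Rcase_abs psi) as [Hneg | Hpos].
  - rewrite Rabs_left in * by exact Hneg.
    pose proof (sin_gt_0 (- psi)) as Hs; rewrite sin_neg in Hs; lra.
  - rewrite Rabs_right in * by exact Hpos.
    pose proof (sin_gt_0 psi); lra.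
Qed.

Lemma cos_neq_0_abs (psi : R) : Rabs psi < PI / 2 -> cos psi <> 0.
Proof. intro H; apply Rabs_def2 in H; pose proof (cos_gt_0 psi); lra. Qed.

Theorem proposition1 :
  (* (i) *)
  gen_refl_sym (Qpsi 0) (line (mkV3 0 0 0) (mkV3 0 0 1)) /\
  (* (ii) vertical line *)
  (forall psi : R, 0 < Rabs psi < PI / 2 ->
     gen_refl_sym (Qpsi psi) (line (mkV3 (tan psi) 0 0) (mkV3 0 0 1))) /\
  (* (ii) horizontal line *)
  (forall psi : R, 0 < Rabs psi <= PI / 2 ->
     gen_refl_sym (Qpsi psi) (line (mkV3 (- (cos psi / sin psi)) 0 0) (mkV3 0 1 0))) /\
  (* (iii)(a) *)
  (forall psi : R, forall p : V3,
     Qpsi (psi + PI / 2) p <-> exists q : V3, Qpsi psi q /\ p = rotX q) /\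
  (* (iii)(b) *)
  (forall psi : R, forall p : V3, Qpsi (psi + PI) p <-> Qpsi psi p) /\
  (* in particular *)
  (forall psi : R, exists p0 d : V3, d <> mkV3 0 0 0 /\
     gen_refl_sym (Qpsi psi) (line p0 d)).
Proof.
  split; [| split; [| split; [| split; [| split]]]].
  - pose proof (Qpsi_sym_vertical 0) as H; rewrite tan_0 in H.
    apply H; rewrite cos_0; lra.
  - intros psi [_ H]; now apply Qpsi_sym_vertical, cos_neq_0_abs.
  - intros psi H; now apply Qpsi_sym_horizontal, sin_neq_0_abs.
  - exact Qpsi_add_PI2.
  - exact Qpsi_add_PI.
  - intro psi; destruct (Req_dec (sin psi) 0) as [Hs | Hs].
    + exists (mkV3 (tan psi) 0 0), (mkV3 0 0 1); split; [intro H; injection H; lra |].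
      apply Qpsi_sym_vertical; intro Hc.
      pose proof (sin_cos_sum_sq psi) as H; rewrite Hs, Hc in H; lra.
    + exists (mkV3 (- (cos psi / sin psi)) 0 0), (mkV3 0 1 0); split; [intro H; injection H; lra |].
      now apply Qpsi_sym_horizontal.
Qed.
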